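(* Let $G$ be a daisy cube and let $P=v_1,v_2,v_3,v_4$ be a path on four vertices in $G$. Then $v_1$ and $v_3$ have a common neighbour different from $v_2$, or $v_2$ and $v_4$ have a common neighbour different from $v_3$.
   Context: For $B=\{0,1\}$ order $B^n$ componentwise: $u\le v$ iff $u_i\le v_i$ for all $i$. The hypercube $Q_n$ has vertex set $B^n$, two strings adjacent iff they differ in exactly one position. For $X\subseteq B^n$, $Q_n(X)$ is the subgraph of $Q_n$ induced by $\{u\in B^n: u\le x\text{ for some }x\in X\}$; a daisy cube is a graph of the form $Q_n(X)$. *)

From mathcomp Require Import all_boot all_order.
Set Implicit Arguments. Unset Strict Implicit. Unset Printing Implicit Defensive.

Definition bstr (n : nat) := {ffun 'I_n -> bool}.

Definition ble n (u v : bstr n) : bool := [forall i, u i <= v i].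

Definition qadj n (u v : bstr n) : bool := #|[set i | u i != v i]| == 1.

(* vertex set of the daisy cube Q_n(X): the down-closure of X *)
Definition daisy n (X : {set bstr n}) : {set bstr n} :=
  [set u | [exists x in X, ble u x]].

From mathcomp Require Import all_boot all_order.

(* Two vertices at distance two in Q_n span a square; its fourth vertex lies in
   Q_n(X) unless the middle vertex is the meet of the two others, since otherwise
   it lies below one of them.  If v2 were the meet of v1, v3 and v3 the meet of
   v2, v4, then v2 <= v3 <= v2. *)

Section Flip.

Context {n : nat}.
Implicit Types (u v m : bstr n) (i j : 'I_n).

Definition bflip u i : bstr n := [ffun x => if x == i then ~~ u x else u x].

Lemma bflipK u i : bflip (bflip u i) i = u.
Proof. by apply/ffunP => x; rewrite !ffunE; case: eqP => // ->; rewrite negbK. Qed.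

Lemma bflipC u i j : bflip (bflip u i) j = bflip (bflip u j) i.
Proof. by apply/ffunP => x; rewrite !ffunE; case: (x == i); case: (x == j). Qed.

Lemma bflip_inj u : injective (bflip u).
Proof.
move=> i j /ffunP /(_ i); rewrite !ffunE eqxx.
by case: eqP => // _; case: (u i).
Qed.

Lemma qadjC u v : qadj u v = qadj v u.
Proof. by rewrite /qadj; under eq_finset do rewrite eq_sym. Qed.

Lemma qadjP u v : reflect (exists i, v = bflip u i) (qadj u v).
Proof.
apply: (iffP cards1P) => [[i /setP Ei] | [i ->]]; exists i.
  apply/ffunP => x; rewrite ffunE; have := Ei x; rewrite !inE.
  by case: (x == i); case: (u x); case: (v x).
by apply/setP => x; rewrite !inE ffunE; case: (x == i); case: (u x).
Qed.

Lemma qadj_bflip u i : qadj u (bflip u i).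
Proof. by apply/qadjP; exists i. Qed.

Lemma ble_trans {u m v} : ble u m -> ble m v -> ble u v.
Proof.
by move=> /forallP h1 /forallP h2; apply/forallP => x; exact: leq_trans (h1 x) (h2 x).
Qed.

Lemma ble_anti {u v} : ble u v -> ble v u -> u = v.
Proof.
move=> /forallP h1 /forallP h2; apply/ffunP => x.
by move: (h1 x) (h2 x); case: (u x); case: (v x).
Qed.

Lemma ble_bflip u i : ble (bflip u i) u = u i.
Proof.
apply/forallP/idP => [/(_ i) | ui x]; rewrite ffunE ?eqxx; first by case: (u i).
by case: eqP => [->|_]; rewrite ?ui.
Qed.

Lemma daisy_down {X : {set bstr n}} {u v} : ble u v -> v \in daisy X -> u \in daisy X.
Proof.
move=> uv; rewrite !inE => /existsP[x /andP[Xx vx]].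
by apply/existsP; exists x; rewrite Xx; exact: ble_trans uv vx.
Qed.

Lemma daisy_square (X : {set bstr n}) u m v :
  u \in daisy X -> v \in daisy X -> u != v -> qadj u m -> qadj m v ->
  ~~ (ble m u && ble m v) ->
  exists w, [/\ w \in daisy X, qadj u w, qadj w v & w != m].
Proof.
move=> Du Dv Nuv /qadjP[i ->] /qadjP[j Ev] not_meet.
have Nji : j != i by apply: contraNneq Nuv => ji; rewrite Ev ji bflipK.
have Ew : bflip u j = bflip v i by rewrite Ev bflipC bflipK.
have vi : v i = ~~ u i by rewrite Ev !ffunE eqxx eq_sym (negbTE Nji).
have uj : u j = ~~ v j by rewrite Ev !ffunE eqxx (negbTE Nji) negbK.
rewrite negb_and -[X in ble X v](bflipK _ j) -Ev !ble_bflip in not_meet.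
exists (bflip u j); split.
- case/orP: not_meet => [ui | vj].
    by apply: (daisy_down _ Dv); rewrite Ew ble_bflip vi.
  by apply: (daisy_down _ Du); rewrite ble_bflip uj.
- exact: qadj_bflip.
- by rewrite Ew qadjC qadj_bflip.
- by rewrite (inj_eq (bflip_inj u)).
Qed.

End Flip.

Theorem lemma4p11 (n : nat) (X : {set bstr n}) (v1 v2 v3 v4 : bstr n) :
  v1 \in daisy X -> v2 \in daisy X -> v3 \in daisy X -> v4 \in daisy X ->
  uniq [:: v1; v2; v3; v4] ->
  qadj v1 v2 -> qadj v2 v3 -> qadj v3 v4 ->
  (exists w, [/\ w \in daisy X, qadj v1 w, qadj w v3 & w != v2]) \/
  (exists w, [/\ w \in daisy X, qadj v2 w, qadj w v4 & w != v3]).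
Proof.
move=> D1 D2 D3 D4 + A12 A23 A34.
rewrite /= !inE !negb_or => /and4P[/and3P[_ N13 _] /andP[N23 N24] _ _].
have [/andP[_ le23] | not_meet2] := boolP (ble v2 v1 && ble v2 v3); last first.
  by left; apply: daisy_square not_meet2.
have [/andP[le32 _] | not_meet3] := boolP (ble v3 v2 && ble v3 v4); last first.
  by right; apply: daisy_square not_meet3.
by move: N23; rewrite (ble_anti le23 le32) eqxx.
Qed.
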